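(* There exist graphs $G$ and $H$ with the same dominated chromatic number for which $|St_{dom}(G)-St_{dom}(H)|$ is arbitrarily large; that is, for every positive integer $N$ there exist graphs $G,H$ with $\chi_{dom}(G)=\chi_{dom}(H)$ and $|St_{dom}(G)-St_{dom}(H)|\ge N$.
   Context: A dominated coloring of a graph is a proper coloring in which every color class is dominated by at least one vertex, i.e. for each color class $C$ there is a vertex adjacent to every vertex of $C$; $\chi_{dom}(G)$ is the minimum number of colors in a dominated coloring. The dom-stability $St_{dom}(G)$ is the minimum number of vertices of $G$ whose removal changes the dominated chromatic number of $G$. *)

From mathcomp Require Import all_boot.
Set Implicit Arguments. Unset Strict Implicit. Unset Printing Implicit Defensive.

Definition simple_graph (T : finType) (e : rel T) : Prop :=
  symmetric e /\ irreflexive e.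

(* c is a dominated coloring of the induced subgraph G[V] using colors < k:
   proper, and every (nonempty) color class is dominated by a vertex of G[V]
   adjacent to all vertices of the class. *)
Definition dom_coloring (T : finType) (e : rel T) (V : {set T}) (k : nat)
    (c : T -> nat) : Prop :=
  [/\ (forall x, x \in V -> c x < k),
      (forall x y, x \in V -> y \in V -> e x y -> c x <> c y)
    & (forall i, (exists x, x \in V /\ c x = i) ->
         exists y, y \in V /\ forall x, x \in V -> c x = i -> e y x)].

Definition is_chi_dom (T : finType) (e : rel T) (V : {set T}) (k : nat) : Prop :=
  (exists c, dom_coloring e V k c) /\
  (forall k' c, dom_coloring e V k' c -> k <= k').

(* St_dom(G) = s : minimum number of vertices whose removal changes chi_dom(G).
   (If G - S has no dominated coloring, chi_dom is considered changed.) *)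
Definition is_St_dom (T : finType) (e : rel T) (s : nat) : Prop :=
  exists k, is_chi_dom e setT k /\
    (exists S : {set T}, #|S| = s /\ ~ is_chi_dom e (~: S) k) /\
    (forall S : {set T}, ~ is_chi_dom e (~: S) k -> s <= #|S|).

From mathcomp Require Import all_boot zify.
Set Implicit Arguments. Unset Strict Implicit. Unset Printing Implicit Defensive.

(* The complete bipartite graph K_{m,m} has chi_dom = 2 as long as both sides
   survive, while an edgeless nonempty graph has no dominated coloring at all.
   Hence St_dom(K_{m,m}) = m: deleting a whole side is necessary and
   sufficient.  K_{N+1,N+1} and K_{1,1} then have the same chi_dom but
   stabilities differing by N. *)

Section DominatedColorings.
Variables (T : finType) (e : rel T) (V : {set T}).

Lemma dom_coloring_edge_ge2 k c x y : x \in V -> y \in V -> e x y ->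
  dom_coloring e V k c -> 2 <= k.
Proof.
move=> Vx Vy exy [ltk proper _].
have := ltk x Vx; have := ltk y Vy; have := proper x y Vx Vy exy; lia.
Qed.

Lemma dom_coloring_independent k c x : x \in V ->
  (forall y z, y \in V -> z \in V -> ~~ e y z) -> ~ dom_coloring e V k c.
Proof.
move=> Vx indep [_ _ dom].
have [y [Vy ey]] := dom (c x) (ex_intro _ x (conj Vx erefl)).
by move: (indep y x Vy Vx); rewrite ey.
Qed.

End DominatedColorings.

Section CompleteBipartite.
Variable m : nat.

Definition complete_bipartite : rel (bool * 'I_m) := fun x y => x.1 != y.1.

Lemma complete_bipartite_simple : simple_graph complete_bipartite.
Proof. by split=> [x y|x]; rewrite /complete_bipartite ?eqxx // eq_sym. Qed.

Lemma chi_dom_complete_bipartite (V : {set bool * 'I_m}) i j :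
  (true, i) \in V -> (false, j) \in V -> is_chi_dom complete_bipartite V 2.
Proof.
move=> Vi Vj; split=> [|k c]; last exact: dom_coloring_edge_ge2 Vi Vj _.
exists (fun x => nat_of_bool x.1); split=> [[[] ?] _ //|[a ?] [b ?] _ _|t].
- by rewrite /complete_bipartite /=; case: a; case: b.
- case=> [[a u] [_ <-]] /=.
  exists (if a then (false, j) else (true, i)); split; first by case: a.
  by move=> [b w] _ /=; rewrite /complete_bipartite /=; case: a; case: b.
Qed.

Lemma side_setC_nonempty (S : {set bool * 'I_m}) b :
  #|S| < m -> exists i, (b, i) \in ~: S.
Proof.
move=> ltSm.
case: (pickP (fun i : 'I_m => (b, i) \in ~: S)) => [i|sideS]; first by exists i.
have side_sub : [set (b, i) | i : 'I_m] \subset S.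
  by apply/subsetP=> _ /imsetP[i _ ->]; move: (sideS i); rewrite inE => /negbFE.
move: (subset_leq_card side_sub); rewrite card_imset ?card_ord; last by move=> p q [].
by rewrite leqNgt ltSm.
Qed.

Lemma St_dom_complete_bipartite : 0 < m -> is_St_dom complete_bipartite m.
Proof.
move=> m_gt0; set i0 := Ordinal m_gt0.
exists 2; split; first exact: (@chi_dom_complete_bipartite _ i0 i0).
split=> [|S chiS].
- exists [set (true, i) | i : 'I_m]; split.
    by rewrite card_imset ?card_ord // => p q [].
  have V0 : (false, i0) \in ~: [set (true, i) | i : 'I_m].
    by rewrite inE; apply/imsetP=> -[].
  move=> [[c col] _]; apply: (dom_coloring_independent V0 _ col).
  move=> [[] y] [[] z]; rewrite !inE ?(imset_f (fun i => (true, i))) //.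
- rewrite leqNgt; apply/negP=> ltSm; apply: chiS.
  have [i Vi] := side_setC_nonempty true ltSm.
  have [j Vj] := side_setC_nonempty false ltSm.
  exact: chi_dom_complete_bipartite Vi Vj.
Qed.

End CompleteBipartite.

Theorem mainTheorem11 : forall N : nat, 0 < N ->
  exists (T1 T2 : finType) (e1 : rel T1) (e2 : rel T2) (k s1 s2 : nat),
    simple_graph e1 /\ simple_graph e2 /\
    is_chi_dom e1 setT k /\ is_chi_dom e2 setT k /\
    is_St_dom e1 s1 /\ is_St_dom e2 s2 /\
    ((N + s2 <= s1) \/ (N + s1 <= s2)).
Proof.
move=> N _.
have chi_setT n (i : 'I_n) : is_chi_dom (@complete_bipartite n) setT 2.
  exact: (@chi_dom_complete_bipartite n _ i i).
exists _, _, (@complete_bipartite N.+1), (@complete_bipartite 1), 2, N.+1, 1.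
split; first exact: complete_bipartite_simple.
split; first exact: complete_bipartite_simple.
split; first exact: chi_setT ord0.
split; first exact: chi_setT ord0.
split; first exact: St_dom_complete_bipartite.
split; first exact: St_dom_complete_bipartite.
by left; rewrite addn1.
Qed.
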